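(* For every $d\ge2$ and every unitary $U\in\mathcal{U}(d)$, $H_2(U)<1-\frac{2}{d^2+1}$; that is, the upper bound $H_2(U)\le 1-\frac{2}{d^2+1}$ obtained from the maximal stabilizer entropy of the Choi state is not attained by any unitary.
   Context: Let $d=d_L^n$ with $d_L\ge2$, $n\ge1$. On $\mathbb{C}^{d_L}$ let $Z|k\rangle=\omega^k|k\rangle$, $X|k\rangle=|k+1\rangle$ (mod $d_L$), $\omega=e^{2\pi i/d_L}$, $\tau=-e^{i\pi/d_L}$, $D_{(a_1,a_2)}=\tau^{a_1a_2}X^{a_1}Z^{a_2}$, and for $\mathbf a=\mathbf a_1\oplus\cdots\oplus\mathbf a_n\in\mathbb{Z}_{d_L}^{2n}$ let $D_{\mathbf a}=D_{\mathbf a_1}\otimes\cdots\otimes D_{\mathbf a_n}$ acting on $\mathbb{C}^d$. The 2-Clifford entropy of a unitary $U$ on $\mathbb{C}^d$ is $H_2(U)=1-\frac{1}{d^6}\sum_{\mathbf a,\mathbf b}\big|\operatorname{tr}(D_{\mathbf a}^\dagger UD_{\mathbf b}U^\dagger)\big|^4$. *)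

From HB Require Import structures.
From mathcomp Require Import all_boot all_order all_algebra spectral.
From mathcomp Require Import complex.
From mathcomp Require Import reals trigo.
Set Implicit Arguments. Unset Strict Implicit. Unset Printing Implicit Defensive.
Import Order.TTheory GRing.Theory Num.Theory.
Local Open Scope ring_scope.
Local Open Scope complex_scope.
Local Open Scope sesquilinear_scope.

Section Weyl.
Variable R : realType.
Variable dL : nat.

Definition omega : R[i] :=
  cos (2%:R * pi / dL%:R) +i* sin (2%:R * pi / dL%:R).
Definition tau : R[i] := - (cos (pi / dL%:R) +i* sin (pi / dL%:R)).

Definition Zq : 'M[R[i]]_dL := \matrix_(r, c) ((r == c)%:R * omega ^+ c).
Definition Xq : 'M[R[i]]_dL := \matrix_(r, c) ((r : nat) == ((c : nat) + 1) %% dL)%N%:R.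

Definition Dq (a : 'I_dL * 'I_dL) : 'M[R[i]]_dL :=
  tau ^+ ((a.1 : nat) * (a.2 : nat))%N *: (Xq ^+ (a.1 : nat) *m Zq ^+ (a.2 : nat)).

Variable n : nat.

(* computational basis of (C^{dL})^{\otimes n}: labels k = (k_1,..,k_n) *)
Definition qbasis := {ffun 'I_n -> 'I_dL}.
Definition wlabel := {ffun 'I_n -> 'I_dL * 'I_dL}.

(* D_a = D_{a_1} (x) ... (x) D_{a_n}, written entrywise in the product basis *)
Definition Dw (a : wlabel) : 'M[R[i]]_(#|qbasis|) :=
  \matrix_(r, c) \prod_(j < n)
     Dq (a j) ((enum_val r : qbasis) j) ((enum_val c : qbasis) j).

Definition qdim : nat := (dL ^ n)%N.

Definition H2 (U : 'M[R[i]]_(#|qbasis|)) : R[i] :=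
  1 - (qdim%:R ^+ 6)^-1 *
      \sum_(a : wlabel) \sum_(b : wlabel)
         `|\tr ((Dw a)^t* *m U *m Dw b *m U^t*)| ^+ 4.

End Weyl.

From HB Require Import structures.
From mathcomp Require Import all_boot all_order all_algebra spectral.
From mathcomp Require Import complex.
From mathcomp Require Import reals trigo.
From mathcomp Require Import ring lra.
Set Implicit Arguments. Unset Strict Implicit. Unset Printing Implicit Defensive.
Import Order.TTheory GRing.Theory Num.Theory.
Local Open Scope ring_scope.
Local Open Scope complex_scope.
Local Open Scope sesquilinear_scope.

(* Write t(a, b) = tr(D_a^* U D_b U^* ) and D = d_L^n.  The Weyl operators
   satisfy the completeness relation sum_a conj(D_a)_(r,c) (D_a)_(r',c') =
   D [r = r'] [c = c'], so by Parseval sum_a |t(a, b)|^2 = D |U D_b U^*|_2^2 =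
   D |D_b|_2^2, and summing over b gives sum_(a,b) |t(a, b)|^2 = D^4.  The
   column b = 0 is concentrated: t(0, 0) = D, which alone contributes D^4 to
   sum |t|^4, while its squares sum to D^2.  On the remaining D^2 - 1 columns
   y^2 >= 2y - 1 applied to y = |t|^2 yields at least
   2 (D^4 - D^2) - (D^2 - 1) D^2 = D^4 - D^2.  Hence sum |t|^4 >= 2 D^4 - D^2,
   i.e. H_2(U) <= 1 - (2 D^2 - 1) / D^4, and this is strictly less than
   1 - 2 / (D^2 + 1) because D > 1. *)

Lemma sum_delta (R : pzSemiRingType) (T : finType) (j : T) (F : T -> R) :
  \sum_i (i == j)%:R * F i = F j.
Proof.
rewrite (bigD1 j) //= eqxx mul1r big1 ?addr0 // => i /negbTE ->.
by rewrite mul0r.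
Qed.

Lemma sum_expr_unity_root (F : idomainType) m (z : F) :
  z ^+ m = 1 -> \sum_(i < m) z ^+ i = (z == 1)%:R * m%:R.
Proof.
move=> zm1; have [->|z_neq1] := eqVneq z 1.
  by rewrite mul1r (eq_bigr (fun=> 1)) => [|i _]; rewrite ?sumr_const ?card_ord ?expr1n.
have /eqP := subrX1 z m; rewrite zm1 subrr eq_sym mulf_eq0 subr_eq0.
by rewrite (negbTE z_neq1) mul0r => /eqP.
Qed.

Lemma sum_sqr_ge (R : numDomainType) (I : finType) (y : I -> R) :
  (forall i, y i \is Num.real) ->
  2%:R * \sum_i y i - #|I|%:R <= \sum_i y i ^+ 2.
Proof.
move=> y_real; rewrite mulr_sumr -sumr_const -sumrB; apply: ler_sum => i _.
rewrite -subr_ge0 (_ : _ - _ = (y i - 1) ^+ 2); last by ring.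
by rewrite real_exprn_even_ge0 // rpredB ?real1.
Qed.

Lemma prod_natr_eq (S : comPzSemiRingType) (I : finType) (T : eqType)
    (f g : {ffun I -> T}) :
  \prod_i (f i == g i)%:R = (f == g)%:R :> S.
Proof.
have [<-|f_neq_g] := eqVneq f g; first by rewrite big1 // => i _; rewrite eqxx.
have /existsP [i fgi] : [exists i, f i != g i].
  apply: contraR f_neq_g => /existsPn fg; apply/eqP/ffunP => i.
  by apply/eqP; rewrite -[_ == _]negbK fg.
by rewrite (bigD1 i) //= (negbTE fgi) mul0r.
Qed.

Lemma conjM_expr (C : numClosedFieldType) (z : C) :
  z^* * z = 1 -> forall m, (z ^+ m)^* * z ^+ m = 1.
Proof. by move=> zz1 m; rewrite rmorphXn -exprMn zz1 expr1n. Qed.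

Lemma clifford_bound_lt (F : numFieldType) (D : F) : 1 < D ->
  2%:R / (D ^+ 2 + 1) < (D ^+ 6)^-1 * (2%:R * D ^+ 4 - D ^+ 2).
Proof.
move=> D_gt1; have D_gt0 : 0 < D := lt_trans ltr01 D_gt1.
have D2_gt0 : 0 < D ^+ 2 + 1 by rewrite addr_gt0 ?exprn_gt0.
rewrite -subr_gt0 (_ : _ - _ = (D ^+ 2 - 1) / (D ^+ 4 * (D ^+ 2 + 1))).
  by rewrite divr_gt0 ?mulr_gt0 ?exprn_gt0 // subr_gt0 exprn_egt1.
by field; rewrite !gt_eqF.
Qed.

Section HilbertSchmidt.
Variable C : numClosedFieldType.

Lemma parseval (A P : finType) (f : A -> P -> C) (m : P -> C) (K : C) :
  (forall p q, \sum_a (f a p)^* * f a q = K * (p == q)%:R) ->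
  \sum_a `|\sum_p (f a p)^* * m p| ^+ 2 = K * \sum_p `|m p| ^+ 2.
Proof.
move=> f_orth.
have cross p q : \sum_a (f a p)^* * m p * ((f a q)^* * m q)^*
    = (q == p)%:R * (K * (m p * (m q)^*)).
  transitivity (m p * (m q)^* * \sum_a (f a p)^* * f a q).
    by rewrite mulr_sumr; apply: eq_bigr => a _; rewrite rmorphM /= conjCK; ring.
  by rewrite f_orth eq_sym; ring.
under eq_bigr do rewrite normCK rmorph_sum mulr_suml.
under eq_bigr do under eq_bigr do rewrite mulr_sumr.
rewrite exchange_big; under eq_bigr do rewrite exchange_big.
under eq_bigr => p _ do under eq_bigr => q _ do rewrite /= cross.
rewrite mulr_sumr; apply: eq_bigr => p _.
by rewrite sum_delta normCK.
Qed.

Lemma mxtrace_adj_mul m n (A M : 'M[C]_(m, n)) :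
  \tr (A^t* *m M) = \sum_(p : 'I_m * 'I_n) (A p.1 p.2)^* * M p.1 p.2.
Proof.
rewrite /mxtrace; under eq_bigr do rewrite mxE.
rewrite exchange_big pair_bigA /=; apply: eq_bigr => p _.
by rewrite !mxE.
Qed.

Lemma mxtrace_mul_adj m n (M : 'M[C]_(m, n)) :
  \tr (M *m M^t*) = \sum_(p : 'I_m * 'I_n) `|M p.1 p.2| ^+ 2.
Proof.
rewrite /mxtrace; under eq_bigr do rewrite mxE.
rewrite pair_bigA /=; apply: eq_bigr => p _.
by rewrite !mxE normCK.
Qed.

Lemma mxtrace_unitary_conj n (U A : 'M[C]_n) : U \is unitarymx ->
  \tr ((U *m A *m U^t*) *m (U *m A *m U^t*)^t*) = \tr (A *m A^t*).
Proof.
move=> U_unitary.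
rewrite trmx_mul map_mxM trmx_mul map_mxM trmxCK !mulmxA mulmxKtV //.
by rewrite -mulmxA mxtrace_mulC !mulmxA mulmxKtV // mxtrace_mulC.
Qed.
End HilbertSchmidt.

Section Cis.
Variable R : realType.

Lemma conj_cisM (t : R) : (cos t +i* sin t)^* * (cos t +i* sin t) = 1.
Proof. by simpc; rewrite -!expr2 cos2Dsin2; congr (_ +i* _); ring. Qed.

Lemma cisX (t : R) m : (cos t +i* sin t) ^+ m = cos (m%:R * t) +i* sin (m%:R * t).
Proof.
elim: m => [|m IHm]; first by rewrite expr0 mul0r cos0 sin0.
rewrite exprS IHm -natr1 mulrDl mul1r cosD sinD; simpc.
by congr (_ +i* _); ring.
Qed.

End Cis.

Section WeylQudit.
Variables (R : realType) (k : nat).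
(* Writing d_L = k.+2 makes 'I_dL the ring Z/d_L, so the shift X acts by c |-> c + 1. *)
Local Notation dL := k.+2.
Local Notation omega := (omega R dL).
Local Notation tau := (tau R dL).

Lemma omega_prim : dL.-primitive_root omega.
Proof.
have dL_gt0 : (0 : R) < dL%:R by rewrite ltr0n.
apply/andP; split=> //; apply/forallP => -[m /= m_lt]; rewrite unity_rootE cisX.
have [->|m_neq] := eqVneq m.+1 dL.
  rewrite (_ : dL%:R * _ = pi *+ 2) ?cos2pi ?sin2pi ?eqxx //.
  by rewrite mulrC divfK ?gt_eqF // mulr_natl.
rewrite eqbF_neg; apply/negP => /eqP [].
pose x : R := m.+1%:R * pi / dL%:R.
have -> : m.+1%:R * (2%:R * pi / dL%:R) = x *+ 2.
  by rewrite /x -mulr_natr; field; rewrite -natrD pnatr_eq0.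
rewrite cos_mulr2n => cos2x.
have x_in : 0 < x < pi.
  rewrite /x divr_gt0 ?mulr_gt0 ?pi_gt0 ?ltr0n //= ltr_pdivrMr //.
  rewrite mulrC ltr_pM2l ?pi_gt0 // ltr_nat ltn_neqAle m_neq.
  exact: m_lt.
have := sin_gt0_pi x_in; have := sin2cos2 x.
rewrite -mulr_natr in cos2x.
have -> : cos x ^+ 2 = 1 by lra.
by rewrite subrr => /eqP; rewrite expf_eq0 /= => /eqP ->; rewrite ltxx.
Qed.

Lemma conj_omegaM : omega^* * omega = 1.
Proof. exact: conj_cisM. Qed.

Lemma conj_tauM : tau^* * tau = 1.
Proof. by rewrite /tau rmorphN mulrNN conj_cisM. Qed.

Lemma sum_conj_omegaX (c c' : 'I_dL) :
  \sum_(i < dL) ((omega ^+ c)^* * omega ^+ c') ^+ i = (c == c')%:R * dL%:R.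
Proof.
have omegaXK := conjM_expr conj_omegaM.
rewrite sum_expr_unity_root; last first.
  rewrite exprMn -rmorphXn -!exprM mulnC [(c' * _)%N]mulnC !exprM.
  by rewrite !(prim_expr_order omega_prim) !expr1n rmorph1 mulr1.
congr ((nat_of_bool _)%:R * _).
apply/idP/idP => [/eqP z1|/eqP <-]; last exact/eqP/omegaXK.
rewrite -val_eqE /= -(modn_small (ltn_ord c)) -(modn_small (ltn_ord c')).
rewrite -(eq_prim_root_expr omega_prim); apply/eqP.
by rewrite -[LHS]mulr1 -z1 mulrA (mulrC (omega ^+ c)) omegaXK mul1r.
Qed.

Lemma XqE (r c : 'I_dL) : Xq R dL r c = (r == c + 1)%:R.
Proof. by rewrite mxE -val_eqE /= modnDmr. Qed.

Lemma XqX m (r c : 'I_dL) : (Xq R dL ^+ m) r c = (r == c + m%:R)%:R.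
Proof.
elim: m r c => [|m IHm] r c; first by rewrite expr0 mxE addr0.
rewrite exprS mxE; under eq_bigr do rewrite IHm mulrC.
by rewrite sum_delta XqE -addrA natr1.
Qed.

Lemma ZqX m (r c : 'I_dL) :
  (Zq R dL ^+ m) r c = (r == c)%:R * omega ^+ (c * m).
Proof.
elim: m r c => [|m IHm] r c; first by rewrite expr0 muln0 mulr1 !mxE.
rewrite exprS mxE; under eq_bigr do rewrite IHm mxE mulrC -mulrA.
by rewrite sum_delta mulnS exprD; ring.
Qed.

Lemma DqE (a : 'I_dL * 'I_dL) (r c : 'I_dL) :
  Dq R a r c = tau ^+ (a.1 * a.2) * ((r == c + a.1)%:R * omega ^+ (c * a.2)).
Proof.
rewrite !mxE; congr (_ * _); under eq_bigr do rewrite XqX ZqX mulrCA.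
by rewrite sum_delta natr_Zp.
Qed.

Lemma Dq_complete (r c r' c' : 'I_dL) :
  \sum_(x : 'I_dL * 'I_dL) (Dq R x r c)^* * Dq R x r' c'
    = dL%:R * ((r == r') && (c == c'))%:R.
Proof.
have split_phase a1 a2 : (Dq R (a1, a2) r c)^* * Dq R (a1, a2) r' c'
    = ((r == c + a1)%:R * (r' == c' + a1)%:R)
      * ((omega ^+ c)^* * omega ^+ c') ^+ a2.
  rewrite !DqE /= !rmorphM /= !rmorph_nat mulrACA (conjM_expr conj_tauM) mul1r.
  by rewrite mulrACA exprMn !rmorphXn -!exprM.
pose F a1 a2 := (Dq R (a1, a2) r c)^* * Dq R (a1, a2) r' c'.
rewrite (eq_bigr (fun x => F x.1 x.2)); last by case.
rewrite -pair_bigA /= /F.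
under eq_bigr do under eq_bigr do rewrite split_phase.
under eq_bigr do rewrite -mulr_sumr sum_conj_omegaX.
have [<-|c_neq] := eqVneq c c'; last first.
  by rewrite andbF mulr0 big1 // => a _; rewrite mul0r mulr0.
rewrite andbT mul1r -mulr_suml mulrC; congr (_ * _).
under eq_bigr => a _ do rewrite (addrC c) -subr_eq eq_sym.
by rewrite sum_delta subrK eq_sym.
Qed.

End WeylQudit.

Section WeylTensor.
Variables (R : realType) (k n : nat).
Local Notation dL := k.+2.
Local Notation d := #|qbasis dL n|.
Local Notation D := ((dL ^ n)%:R : R[i]).

Lemma card_qbasis : d = (dL ^ n)%N.
Proof. by rewrite card_ffun !card_ord. Qed.

Lemma card_wlabel : #|wlabel dL n| = ((dL ^ n) ^ 2)%N.
Proof. by rewrite card_ffun card_prod !card_ord expnMn mulnn. Qed.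

Lemma Dw_complete (r c r' c' : 'I_d) :
  \sum_(a : wlabel dL n) (Dw R a r c)^* * Dw R a r' c'
    = D * ((r == r') && (c == c'))%:R.
Proof.
under eq_bigr do rewrite !mxE rmorph_prod -big_split /=.
pose F j (x : 'I_dL * 'I_dL) :=
  (Dq R x (enum_val r j) (enum_val c j))^* * Dq R x (enum_val r' j) (enum_val c' j).
rewrite -(bigA_distr_bigA F) /F; under eq_bigr do rewrite Dq_complete.
rewrite big_split /= prodr_const card_ord natrX; congr (_ * _).
under eq_bigr do rewrite -mulnb natrM.
by rewrite big_split /= !prod_natr_eq !(inj_eq enum_val_inj) -natrM mulnb.
Qed.

Lemma Dw0 : Dw R (0 : wlabel dL n) = 1%:M.
Proof.
apply/matrixP => r c; rewrite !mxE.
under eq_bigr do rewrite ffunE DqE /= !muln0 !expr0 mul1r mulr1 addr0.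
by rewrite prod_natr_eq (inj_eq enum_val_inj).
Qed.

Lemma weyl_parseval (M : 'M[R[i]]_d) :
  \sum_(a : wlabel dL n) `|\tr ((Dw R a)^t* *m M)| ^+ 2 = D * \tr (M *m M^t*).
Proof.
under eq_bigr do rewrite mxtrace_adj_mul.
rewrite mxtrace_mul_adj.
apply: (@parseval _ _ _ (fun a p => Dw R a p.1 p.2) (fun p => M p.1 p.2)).
by move=> [r c] [r' c'] /=; rewrite Dw_complete.
Qed.

Lemma sum_Dw_norm : \sum_(b : wlabel dL n) \tr (Dw R b *m (Dw R b)^t*) = D ^+ 3.
Proof.
under eq_bigr do rewrite mxtrace_mul_adj.
rewrite exchange_big /=.
under eq_bigr do (under eq_bigr do rewrite normCK mulrC; rewrite Dw_complete !eqxx mulr1).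
by rewrite sumr_const card_prod !card_ord card_qbasis -[_ *+ _]mulr_natr natrM; ring.
Qed.

End WeylTensor.

Section CliffordSum.
Variables (R : realType) (k n : nat).
Local Notation dL := k.+2.
Local Notation W := (wlabel dL n).
Local Notation D := ((dL ^ n)%:R : R[i]).
Variable U : 'M[R[i]]_#|qbasis dL n|.
Hypothesis U_unitary : U \is unitarymx.
Local Notation cliff a b := (\tr ((Dw R a)^t* *m U *m Dw R b *m U^t*)).

Lemma cliff_col_sum (b : W) :
  \sum_a `|cliff a b| ^+ 2 = D * \tr (Dw R b *m (Dw R b)^t*).
Proof.
under eq_bigr do rewrite -!mulmxA (mulmxA U).
by rewrite weyl_parseval mxtrace_unitary_conj.
Qed.

Lemma cliff_col0_sum : \sum_a `|cliff a (0 : W)| ^+ 2 = D ^+ 2.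
Proof. by rewrite cliff_col_sum Dw0 trmx1 map_mx1 mulmx1 mxtrace1 card_qbasis. Qed.

Lemma cliff_sum : \sum_(b : W) \sum_a `|cliff a b| ^+ 2 = D ^+ 4.
Proof.
under eq_bigr do rewrite cliff_col_sum.
by rewrite -mulr_sumr sum_Dw_norm -exprS.
Qed.

Lemma cliff00 : cliff (0 : W) 0 = D.
Proof.
by rewrite Dw0 trmx1 map_mx1 mul1mx mulmx1 (unitarymxP U_unitary) mxtrace1 card_qbasis.
Qed.

Lemma cliff_sum4_ge : 2%:R * D ^+ 4 - D ^+ 2 <= \sum_a \sum_b `|cliff a b| ^+ 4.
Proof.
pose x a b := `|cliff a b| ^+ 2.
pose g b := 2%:R * \sum_a x a b - D ^+ 2.
have x_real a b : x a b \is Num.real by rewrite rpredX ?normr_real.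
have col0_ge : D ^+ 4 <= \sum_a x a 0 ^+ 2.
  have -> : D ^+ 4 = x 0 0 ^+ 2 by rewrite /x cliff00 normr_nat -!exprM.
  rewrite (bigD1 (0 : W)) // lerDl.
  by apply: sumr_ge0 => a _; rewrite exprn_ge0 ?exprn_ge0.
have cols_ge : \sum_(b : W | b != 0) g b <= \sum_(b : W | b != 0) \sum_a x a b ^+ 2.
  apply: ler_sum => b _; rewrite /g -(natrX _ (dL ^ n) 2) -card_wlabel.
  exact: (@sum_sqr_ge _ _ (x^~ b) (x_real^~ b)).
have sum_g : \sum_(b : W | b != 0) g b = D ^+ 4 - D ^+ 2.
  rewrite (_ : D ^+ 4 - _ = \sum_b g b - g 0).
    by rewrite [X in X - _](bigD1 (0 : W)) // addrAC subrr add0r.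
  rewrite sumrB -mulr_sumr cliff_sum sumr_const card_wlabel /g cliff_col0_sum.
  by rewrite -(mulr_natr (D ^+ 2)) (natrX _ (dL ^ n) 2); ring.
have -> : \sum_a \sum_b `|cliff a b| ^+ 4 = \sum_b \sum_a x a b ^+ 2.
  by rewrite exchange_big; apply: eq_bigr => b _; apply: eq_bigr => a _; rewrite -exprM.
rewrite (bigD1 (0 : W)) //; apply: le_trans (lerD col0_ge cols_ge).
by rewrite sum_g addrA -mulr2n mulr_natl lexx.
Qed.

End CliffordSum.

Theorem theorem5 (R : realType) (dL n : nat) (hdL : (2 <= dL)%N) (hn : (1 <= n)%N)
  (U : 'M[R[i]]_(#|qbasis dL n|)) (hU : U \is unitarymx) :
  H2 U < 1 - 2%:R / ((qdim dL n)%:R ^+ 2 + 1).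
Proof.
case: dL hdL U hU => [|[|k]] // _ U hU.
have D_gt1 : 1 < ((k.+2 ^ n)%:R : R[i]) by rewrite ltr1n -(exp1n n) ltn_exp2r.
rewrite /H2 /qdim ltrD2l ltrN2.
apply: lt_le_trans (clifford_bound_lt D_gt1) _.
by rewrite ler_wpM2l ?invr_ge0 ?exprn_ge0 ?ler0n ?cliff_sum4_ge.
Qed.
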